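(* Let $A\bowtie^{\theta} I$ be an amalgamated Banach algebra as in the context, and assume that $A\bowtie^\theta I$ is commutative, $\sigma(A)\neq\emptyset$, and $\theta(A)I=\{\theta(a)i: a\in A, i\in I\}$ has dense linear span in $I$. Then $A\bowtie^{\theta} I$ is semisimple if and only if both $A$ and $I$ are semisimple.
   Context: Let $A$ and $B$ be Banach algebras, $\theta:A\to B$ a continuous algebra homomorphism with $\|\theta\|\le 1$, and $I$ a closed two-sided ideal of $B$. The amalgamated Banach algebra $A\bowtie^{\theta} I$ is the Banach space $\{(a,i): a\in A,\ i\in I\}$ with norm $\|(a,i)\|=\|a\|+\|i\|$ and product $(a,i)\cdot(a',i')=(aa',\ \theta(a)i'+i\theta(a')+ii')$. For a commutative Banach algebra $C$, $\sigma(C)$ is the set of nonzero multiplicative linear functionals on $C$, $\mathrm{rad}\,C=\bigcap_{\chi\in\sigma(C)}\ker\chi$ (equal to $C$ if $\sigma(C)=\emptyset$), and $C$ is semisimple if $\mathrm{rad}\,C=\{0\}$. *)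

From Stdlib Require Import Reals List.
Open Scope R_scope.
Set Implicit Arguments.

Record C := mkC { Re : R; Im : R }.
Definition C0 : C := mkC 0 0.
Definition C1 : C := mkC 1 0.
Definition Cadd (z w : C) : C := mkC (Re z + Re w) (Im z + Im w).
Definition Cmul (z w : C) : C :=
  mkC (Re z * Re w - Im z * Im w) (Re z * Im w + Im z * Re w).
Definition Cnorm (z : C) : R := sqrt (Re z * Re z + Im z * Im z).

Record BanachAlgebra := {
  ba_car :> Type;
  ba_zero : ba_car;
  ba_add : ba_car -> ba_car -> ba_car;
  ba_opp : ba_car -> ba_car;
  ba_scal : C -> ba_car -> ba_car;
  ba_mul : ba_car -> ba_car -> ba_car;
  ba_norm : ba_car -> R;
  ba_addA : forall x y z, ba_add x (ba_add y z) = ba_add (ba_add x y) z;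
  ba_addC : forall x y, ba_add x y = ba_add y x;
  ba_add0 : forall x, ba_add ba_zero x = x;
  ba_addN : forall x, ba_add x (ba_opp x) = ba_zero;
  ba_scalA : forall a b x, ba_scal a (ba_scal b x) = ba_scal (Cmul a b) x;
  ba_scal1 : forall x, ba_scal C1 x = x;
  ba_scalDr : forall a x y, ba_scal a (ba_add x y) = ba_add (ba_scal a x) (ba_scal a y);
  ba_scalDl : forall a b x, ba_scal (Cadd a b) x = ba_add (ba_scal a x) (ba_scal b x);
  ba_mulA : forall x y z, ba_mul x (ba_mul y z) = ba_mul (ba_mul x y) z;
  ba_mulDr : forall x y z, ba_mul x (ba_add y z) = ba_add (ba_mul x y) (ba_mul x z);
  ba_mulDl : forall x y z, ba_mul (ba_add x y) z = ba_add (ba_mul x z) (ba_mul y z);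
  ba_mulZl : forall a x y, ba_mul (ba_scal a x) y = ba_scal a (ba_mul x y);
  ba_mulZr : forall a x y, ba_mul x (ba_scal a y) = ba_scal a (ba_mul x y);
  ba_norm_eq0 : forall x, ba_norm x = 0 <-> x = ba_zero;
  ba_normD : forall x y, ba_norm (ba_add x y) <= ba_norm x + ba_norm y;
  ba_normZ : forall a x, ba_norm (ba_scal a x) = Cnorm a * ba_norm x;
  ba_normM : forall x y, ba_norm (ba_mul x y) <= ba_norm x * ba_norm y;
  ba_complete : forall u : nat -> ba_car,
    (forall eps, eps > 0 -> exists N, forall m n, (N <= m)%nat -> (N <= n)%nat ->
        ba_norm (ba_add (u m) (ba_opp (u n))) < eps) ->
    exists l, forall eps, eps > 0 -> exists N, forall n, (N <= n)%nat ->
        ba_norm (ba_add (u n) (ba_opp l)) < eps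
}.

Definition ba_sub (B : BanachAlgebra) (x y : B) : B := ba_add B x (ba_opp B y).

Record closed_ideal (B : BanachAlgebra) := {
  ci_mem : B -> Prop;
  ci_zero : ci_mem (ba_zero B);
  ci_add : forall x y, ci_mem x -> ci_mem y -> ci_mem (ba_add B x y);
  ci_scal : forall a x, ci_mem x -> ci_mem (ba_scal B a x);
  ci_mull : forall b x, ci_mem x -> ci_mem (ba_mul B b x);
  ci_mulr : forall b x, ci_mem x -> ci_mem (ba_mul B x b);
  ci_closed : forall (u : nat -> B) (l : B), (forall n, ci_mem (u n)) ->
    (forall eps, eps > 0 -> exists N, forall n, (N <= n)%nat ->
        ba_norm B (ba_sub B (u n) l) < eps) -> ci_mem l
}.

Definition isub (B : BanachAlgebra) (I : closed_ideal B) : Type := { x : B | ci_mem I x }.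

Section Ideal.
Variables (B : BanachAlgebra) (I : closed_ideal B).
Definition isub_zero : isub I := exist _ (ba_zero B) (ci_zero I).
Definition isub_add (x y : isub I) : isub I :=
  exist _ (ba_add B (proj1_sig x) (proj1_sig y)) (ci_add I _ _ (proj2_sig x) (proj2_sig y)).
Definition isub_scal (a : C) (x : isub I) : isub I :=
  exist _ (ba_scal B a (proj1_sig x)) (ci_scal I a _ (proj2_sig x)).
Definition isub_mul (x y : isub I) : isub I :=
  exist _ (ba_mul B (proj1_sig x) (proj1_sig y)) (ci_mulr I (proj1_sig y) _ (proj2_sig x)).
Definition isub_lmul (b : B) (x : isub I) : isub I :=
  exist _ (ba_mul B b (proj1_sig x)) (ci_mull I b _ (proj2_sig x)).
Definition isub_rmul (x : isub I) (b : B) : isub I :=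
  exist _ (ba_mul B (proj1_sig x) b) (ci_mulr I b _ (proj2_sig x)).
End Ideal.

Section Amalgamation.
Variables (A B : BanachAlgebra) (theta : A -> B) (I : closed_ideal B).
Definition amal : Type := (ba_car A * isub I)%type.
Definition amal_zero : amal := (ba_zero A, isub_zero I).
Definition amal_add (x y : amal) : amal :=
  (ba_add A (fst x) (fst y), isub_add (snd x) (snd y)).
Definition amal_scal (c : C) (x : amal) : amal :=
  (ba_scal A c (fst x), isub_scal c (snd x)).
Definition amal_mul (x y : amal) : amal :=
  (ba_mul A (fst x) (fst y),
   isub_add (isub_add (isub_lmul (theta (fst x)) (snd y)) (isub_rmul (snd x) (theta (fst y))))
            (isub_mul (snd x) (snd y))).
Definition amal_norm (x : amal) : R := ba_norm A (fst x) + ba_norm B (proj1_sig (snd x)).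
End Amalgamation.

Definition is_character {T : Type} (add : T -> T -> T) (scal : C -> T -> T)
    (mul : T -> T -> T) (chi : T -> C) : Prop :=
  (forall x y, chi (add x y) = Cadd (chi x) (chi y)) /\
  (forall c x, chi (scal c x) = Cmul c (chi x)) /\
  (forall x y, chi (mul x y) = Cmul (chi x) (chi y)) /\
  (exists x, chi x <> C0).

(* x ∈ rad T  iff  chi x = 0 for every chi ∈ σ(T) (so rad T = T if σ(T) = ∅) *)
Definition in_rad {T : Type} (add : T -> T -> T) (scal : C -> T -> T)
    (mul : T -> T -> T) (x : T) : Prop :=
  forall chi, is_character add scal mul chi -> chi x = C0.

Definition semisimple {T : Type} (zero : T) (add : T -> T -> T) (scal : C -> T -> T)
    (mul : T -> T -> T) : Prop :=
  forall x, in_rad add scal mul x -> x = zero.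

Definition span_sum (A B : BanachAlgebra) (theta : A -> B) (I : closed_ideal B)
    (l : list (C * ba_car A * isub I)) : B :=
  fold_right (fun t acc =>
     ba_add B (ba_scal B (fst (fst t)) (ba_mul B (theta (snd (fst t))) (proj1_sig (snd t)))) acc)
   (ba_zero B) l.

Definition dense_span (A B : BanachAlgebra) (theta : A -> B) (I : closed_ideal B) : Prop :=
  forall x : B, ci_mem I x -> forall eps, eps > 0 ->
    exists l : list (C * ba_car A * isub I),
      ba_norm B (ba_sub B x (@span_sum A B theta I l)) < eps.

(* A character of A ⋈ I either vanishes on {0} × I, and then it is a character of A
   composed with the first projection, or it restricts to a character ψ of I, and
   then it is determined by ψ: choosing i0 with ψ(i0) ≠ 0, commutativity forces
   χ(a, 0) = ψ(θ(a) i0) / ψ(i0).  Conversely every character of A lifts along the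
   projection, and every character ψ of I extends by this formula.  Hence
   rad(A ⋈ I) = rad A × rad I. *)
From Pilot Require Import Defs.
From Stdlib Require Import Reals Lra ProofIrrelevance Classical.
Open Scope R_scope.

Ltac Csimpl := repeat match goal with z : Defs.C |- _ => destruct z end;
  unfold Cadd, Cmul, C0, Defs.C1 in *; simpl in *.

Lemma Cadd_0l z : Cadd C0 z = z.
Proof. Csimpl; f_equal; ring. Qed.

Lemma Cmul_0l z : Cmul C0 z = C0.
Proof. Csimpl; f_equal; ring. Qed.

Lemma Cmul_1r z : Cmul z Defs.C1 = z.
Proof. Csimpl; f_equal; ring. Qed.

Lemma Cmul_assoc a b c : Cmul (Cmul a b) c = Cmul a (Cmul b c).
Proof. Csimpl; f_equal; ring. Qed.

Lemma Cmul_comm a b : Cmul a b = Cmul b a.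
Proof. Csimpl; f_equal; ring. Qed.

Lemma Cadd_idem z : Cadd z z = z -> z = C0.
Proof. destruct z as [a b]; unfold Cadd, C0; simpl; intro H; injection H; intros; f_equal; lra. Qed.

Definition Cinv (z : Defs.C) : Defs.C :=
  mkC (Re z / (Re z * Re z + Im z * Im z)) (- Im z / (Re z * Re z + Im z * Im z)).

Lemma Cmul_inv p : p <> C0 -> Cmul p (Cinv p) = Defs.C1.
Proof.
  destruct p as [a b]; unfold Cinv, Cmul, C0, Defs.C1; simpl; intro Hp.
  assert (Hn : a * a + b * b <> 0).
  { intro E; apply Hp; assert (a = 0) by nra; assert (b = 0) by nra; subst; reflexivity. }
  f_equal; field; auto.
Qed.

Lemma Cmul_eq_divr u v p q : p <> C0 -> Cmul u p = Cmul v q ->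
  u = Cmul (Cmul v (Cinv p)) q.
Proof.
  intros Hp E.
  rewrite <- (Cmul_1r u), <- (Cmul_inv _ Hp), <- Cmul_assoc, E, !Cmul_assoc, (Cmul_comm q).
  reflexivity.
Qed.

Section AlgebraFacts.
Variable X : BanachAlgebra.

Lemma ba_add_idem (x : X) : ba_add X x x = x -> x = ba_zero X.
Proof.
  intro H. rewrite <- (ba_addN X x). rewrite <- H at 2.
  rewrite <- ba_addA, ba_addN, ba_addC, ba_add0. reflexivity.
Qed.

Lemma ba_add0r (x : X) : ba_add X x (ba_zero X) = x.
Proof. rewrite ba_addC; apply ba_add0. Qed.

Lemma ba_mul0l (y : X) : ba_mul X (ba_zero X) y = ba_zero X.
Proof. apply ba_add_idem. rewrite <- ba_mulDl, ba_add0. reflexivity. Qed.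

Lemma ba_mul0r (y : X) : ba_mul X y (ba_zero X) = ba_zero X.
Proof. apply ba_add_idem. rewrite <- ba_mulDr, ba_add0. reflexivity. Qed.

Lemma ba_scal0 c : ba_scal X c (ba_zero X) = ba_zero X.
Proof. apply ba_add_idem. rewrite <- ba_scalDr, ba_add0. reflexivity. Qed.

End AlgebraFacts.

Lemma isub_eq (B : BanachAlgebra) (I : closed_ideal B) (x y : isub I) :
  proj1_sig x = proj1_sig y -> x = y.
Proof. destruct x, y; simpl; intros ->; f_equal; apply proof_irrelevance. Qed.

Section CharacterPullback.
Variables (S T : Type).
Variables (addS : S -> S -> S) (scalS : Defs.C -> S -> S) (mulS : S -> S -> S).
Variables (addT : T -> T -> T) (scalT : Defs.C -> T -> T) (mulT : T -> T -> T).
Variable f : S -> T.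
Hypothesis f_add : forall x y, f (addS x y) = addT (f x) (f y).
Hypothesis f_scal : forall c x, f (scalS c x) = scalT c (f x).
Hypothesis f_mul : forall x y, f (mulS x y) = mulT (f x) (f y).

(* A character of T composed with f is a character of S unless it vanishes identically. *)
Lemma in_rad_hom x : in_rad addS scalS mulS x -> in_rad addT scalT mulT (f x).
Proof.
  intros Hx chi [chi_add [chi_scal [chi_mul _]]].
  destruct (classic (exists y, chi (f y) <> C0)) as [Hnz | Hz].
  - apply (Hx (fun y => chi (f y))); repeat split; auto.
    + intros; rewrite f_add; apply chi_add.
    + intros; rewrite f_scal; apply chi_scal.
    + intros; rewrite f_mul; apply chi_mul.
  - apply NNPP; intro Hfx; apply Hz; eauto.
Qed.

Lemma semisimple_of_hom (zeroS : S) (zeroT : T) :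
  (forall x, f x = zeroT -> x = zeroS) ->
  semisimple zeroT addT scalT mulT -> semisimple zeroS addS scalS mulS.
Proof. intros f_inj HT x Hx; apply f_inj, HT, in_rad_hom, Hx. Qed.

End CharacterPullback.

Arguments in_rad_hom {S T addS scalS mulS addT scalT mulT} f.
Arguments semisimple_of_hom {S T addS scalS mulS addT scalT mulT} f.

Section Amalgamation.
Variables (A B : BanachAlgebra) (theta : A -> B) (I : closed_ideal B).
Hypothesis theta_add : forall x y, theta (ba_add A x y) = ba_add B (theta x) (theta y).
Hypothesis theta_scal : forall c x, theta (ba_scal A c x) = ba_scal B c (theta x).
Hypothesis theta_mul : forall x y, theta (ba_mul A x y) = ba_mul B (theta x) (theta y).

Local Notation amal := (amal A I).
Local Notation amal_add := (@amal_add A B I).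
Local Notation amal_scal := (@amal_scal A B I).
Local Notation amal_mul := (@amal_mul A B theta I).

Lemma theta0 : theta (ba_zero A) = ba_zero B.
Proof. apply ba_add_idem. rewrite <- theta_add, ba_add0. reflexivity. Qed.

Definition amal_inl (a : A) : amal := (a, isub_zero I).
Definition amal_inr (j : isub I) : amal := (ba_zero A, j).

Lemma amal_inl_hom :
  (forall x y, amal_inl (ba_add A x y) = amal_add (amal_inl x) (amal_inl y)) /\
  (forall c x, amal_inl (ba_scal A c x) = amal_scal c (amal_inl x)) /\
  (forall x y, amal_inl (ba_mul A x y) = amal_mul (amal_inl x) (amal_inl y)).
Proof.
  unfold amal_inl, Defs.amal_add, Defs.amal_scal, Defs.amal_mul; simpl.
  repeat split; intros; f_equal; apply isub_eq; simpl.
  - symmetry; apply ba_add0.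
  - symmetry; apply ba_scal0.
  - rewrite !ba_mul0l, !ba_mul0r, !ba_add0; reflexivity.
Qed.

Lemma amal_inr_hom :
  (forall j k, amal_inr (isub_add j k) = amal_add (amal_inr j) (amal_inr k)) /\
  (forall c j, amal_inr (isub_scal c j) = amal_scal c (amal_inr j)) /\
  (forall j k, amal_inr (isub_mul j k) = amal_mul (amal_inr j) (amal_inr k)).
Proof.
  unfold amal_inr, Defs.amal_add, Defs.amal_scal, Defs.amal_mul; simpl.
  repeat split; intros; f_equal.
  - symmetry; apply ba_add0.
  - symmetry; apply ba_scal0.
  - symmetry; apply ba_mul0l.
  - apply isub_eq; simpl. rewrite theta0, !ba_mul0l, !ba_mul0r, !ba_add0; reflexivity.
Qed.

Section Commutative.
Hypothesis amal_mulC : forall x y : amal, amal_mul x y = amal_mul y x.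

Lemma theta_ideal_commute a (j : isub I) :
  ba_mul B (theta a) (proj1_sig j) = ba_mul B (proj1_sig j) (theta a).
Proof.
  pose proof (f_equal (fun p => proj1_sig (snd p)) (amal_mulC (amal_inl a) (amal_inr j))) as H.
  simpl in H. rewrite theta0, !ba_mul0l, !ba_mul0r, !ba_add0r, ba_add0 in H. exact H.
Qed.

Lemma ideal_commute (j k : isub I) :
  ba_mul B (proj1_sig j) (proj1_sig k) = ba_mul B (proj1_sig k) (proj1_sig j).
Proof.
  pose proof (f_equal (fun p => proj1_sig (snd p)) (amal_mulC (amal_inr j) (amal_inr k))) as H.
  simpl in H. rewrite theta0, !ba_mul0l, !ba_mul0r, !ba_add0 in H. exact H.
Qed.

Section CharacterExtension.
Variables (psi : isub I -> Defs.C) (i0 : isub I).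
Hypothesis psi_char : is_character (@isub_add B I) (@isub_scal B I) (@isub_mul B I) psi.
Hypothesis psi_i0 : psi i0 <> C0.

Definition theta_char (a : A) : Defs.C := Cmul (psi (isub_lmul (theta a) i0)) (Cinv (psi i0)).

Definition ext_char (p : amal) : Defs.C := Cadd (theta_char (fst p)) (psi (snd p)).

Lemma psi_lmul_theta a j : psi (isub_lmul (theta a) j) = Cmul (theta_char a) (psi j).
Proof.
  destruct psi_char as [_ [_ [psi_mul _]]].
  apply Cmul_eq_divr; auto. rewrite <- !psi_mul.
  f_equal; apply isub_eq; simpl. rewrite <- !ba_mulA, (ideal_commute j i0). reflexivity.
Qed.

Lemma theta_char0 : theta_char (ba_zero A) = C0.
Proof.
  destruct psi_char as [psi_add _].
  unfold theta_char. replace (isub_lmul (theta (ba_zero A)) i0) with (isub_zero I).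
  - rewrite (Cadd_idem (psi (isub_zero I))); [apply Cmul_0l|].
    rewrite <- psi_add; f_equal; apply isub_eq; simpl; apply ba_add0.
  - apply isub_eq; simpl. rewrite theta0, ba_mul0l; reflexivity.
Qed.

Lemma theta_char_mul x y : theta_char (ba_mul A x y) = Cmul (theta_char x) (theta_char y).
Proof.
  unfold theta_char at 1.
  replace (isub_lmul (theta (ba_mul A x y)) i0)
    with (isub_lmul (theta x) (isub_lmul (theta y) i0)).
  - rewrite psi_lmul_theta, Cmul_assoc; reflexivity.
  - apply isub_eq; simpl. rewrite theta_mul, ba_mulA; reflexivity.
Qed.

Lemma ext_char_inr j : ext_char (amal_inr j) = psi j.
Proof. unfold ext_char; simpl; rewrite theta_char0; apply Cadd_0l. Qed.

Lemma ext_char_character : is_character amal_add amal_scal amal_mul ext_char.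
Proof.
  destruct psi_char as [psi_add [psi_scal [psi_mul _]]].
  unfold ext_char; repeat split.
  - intros [x j] [y k]; simpl. rewrite psi_add. unfold theta_char.
    replace (isub_lmul (theta (ba_add A x y)) i0)
      with (isub_add (isub_lmul (theta x) i0) (isub_lmul (theta y) i0)).
    + rewrite psi_add. generalize (psi (isub_lmul (theta x) i0)),
        (psi (isub_lmul (theta y) i0)), (psi j), (psi k), (Cinv (psi i0)).
      intros; Csimpl; f_equal; ring.
    + apply isub_eq; simpl. rewrite theta_add, ba_mulDl; reflexivity.
  - intros c [x j]; simpl. rewrite psi_scal. unfold theta_char.
    replace (isub_lmul (theta (ba_scal A c x)) i0)
      with (isub_scal c (isub_lmul (theta x) i0)).
    + rewrite psi_scal. generalize (psi (isub_lmul (theta x) i0)), (psi j), (Cinv (psi i0)).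
      intros; Csimpl; f_equal; ring.
    + apply isub_eq; simpl. rewrite theta_scal, ba_mulZl; reflexivity.
  - intros [x j] [y k]; simpl. rewrite !psi_add, psi_mul.
    replace (isub_rmul j (theta y)) with (isub_lmul (theta y) j)
      by (apply isub_eq; simpl; apply theta_ideal_commute).
    rewrite !psi_lmul_theta, theta_char_mul.
    generalize (theta_char x), (theta_char y), (psi j), (psi k).
    intros; Csimpl; f_equal; ring.
  - exists (amal_inr i0). fold (ext_char (amal_inr i0)). rewrite ext_char_inr; exact psi_i0.
Qed.

End CharacterExtension.

Lemma in_rad_amal_inr j :
  in_rad amal_add amal_scal amal_mul (amal_inr j) ->
  in_rad (@isub_add B I) (@isub_scal B I) (@isub_mul B I) j.
Proof.
  intros Hj psi Hpsi.
  destruct (proj2 (proj2 (proj2 Hpsi))) as [i0 psi_i0].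
  rewrite <- (ext_char_inr psi i0 Hpsi j).
  apply Hj, ext_char_character; assumption.
Qed.

End Commutative.

End Amalgamation.

Theorem corollary5p4 (A B : BanachAlgebra) (theta : ba_car A -> ba_car B)
  (theta_add : forall x y, theta (ba_add A x y) = ba_add B (theta x) (theta y))
  (theta_scal : forall c x, theta (ba_scal A c x) = ba_scal B c (theta x))
  (theta_mul : forall x y, theta (ba_mul A x y) = ba_mul B (theta x) (theta y))
  (theta_norm : forall x, ba_norm B (theta x) <= ba_norm A x)
  (I : closed_ideal B)
  (Hcomm : forall x y : amal A I, @amal_mul A B theta I x y = @amal_mul A B theta I y x)
  (HsigmaA : exists chi, is_character (ba_add A) (ba_scal A) (ba_mul A) chi)
  (Hdense : @dense_span A B theta I) :
  semisimple (amal_zero A I) (@amal_add A B I) (@amal_scal A B I) (@amal_mul A B theta I)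
  <->
  (semisimple (ba_zero A) (ba_add A) (ba_scal A) (ba_mul A) /\
   semisimple (@isub_zero B I) (@isub_add B I) (@isub_scal B I) (@isub_mul B I)).
Proof.
  destruct (@amal_inl_hom A B theta I) as [inl_add [inl_scal inl_mul]].
  destruct (@amal_inr_hom A B theta I theta_add) as [inr_add [inr_scal inr_mul]].
  split.
  - intro Hs; split.
    + refine (semisimple_of_hom (amal_inl A B I) inl_add inl_scal inl_mul _ _ _ Hs).
      intros x Hx; exact (f_equal fst Hx).
    + refine (semisimple_of_hom (amal_inr A B I) inr_add inr_scal inr_mul _ _ _ Hs).
      intros j Hj; exact (f_equal snd Hj).
  - intros [HA HI] [a i] Hr.
    assert (Ha : a = ba_zero A).
    { apply HA. exact (in_rad_hom fst (fun _ _ => eq_refl) (fun _ _ => eq_refl)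
                         (fun _ _ => eq_refl) _ Hr). }
    subst a.
    rewrite (HI i (@in_rad_amal_inr A B theta I theta_add theta_scal theta_mul Hcomm _ Hr)).
    reflexivity.
Qed.
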